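(* Let $X$ be a topological space and $x\in X$. Then $\mathrm{cl}_\theta(\{x\})$ is a finitely non-Urysohn subset of $X$ that contains $x$.
   Context: For $A\subseteq X$, $\mathrm{cl}_\theta(A):=\{y\in X:\ \overline{B}\cap A\neq\emptyset$ for every open neighborhood $B$ of $y\}$. A non-empty subset $A$ of $X$ is finitely non-Urysohn if for every non-empty finite $F\subseteq A$ and every family $\{U_y:y\in F\}$ of open neighborhoods $U_y$ of $y$, $\bigcap_{y\in F}\overline{U_y}\neq\emptyset$. *)

From HB Require Import structures.
From mathcomp Require Import all_boot all_order.
From mathcomp Require Import all_classical topology.
Set Implicit Arguments. Unset Strict Implicit. Unset Printing Implicit Defensive.
Local Open Scope classical_set_scope.

Definition theta_closure (X : topologicalType) (A : set X) : set X :=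
  [set y | forall B : set X, open B -> B y -> closure B `&` A !=set0].

Definition finitely_non_Urysohn (X : topologicalType) (A : set X) : Prop :=
  A !=set0 /\
  forall (F : set X), finite_set F -> F !=set0 -> F `<=` A ->
  forall U : X -> set X, (forall y, F y -> open (U y) /\ U y y) ->
  \bigcap_(y in F) closure (U y) !=set0.

From HB Require Import structures.
From mathcomp Require Import all_boot all_order.
From mathcomp Require Import all_classical topology.
Local Open Scope classical_set_scope.

(* Every point of cl_theta {x} has x in the closure of each of its open
   neighbourhoods, so x itself lies in every intersection of closures
   required by the finitely non-Urysohn condition. *)

Lemma theta_closure_set1P (X : topologicalType) (x y : X) :
  theta_closure [set x] y <->
  (forall B : set X, open B -> B y -> closure B x).
Proof.
split=> [thy B oB By | clx B oB By].
- by have [z [clBz <-]] := thy B oB By.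
- by exists x; split; [exact: clx | ].
Qed.

Lemma theta_closure_set1_refl (X : topologicalType) (x : X) :
  theta_closure [set x] x.
Proof. by apply/theta_closure_set1P => B _ Bx; exact: subset_closure. Qed.

Lemma finitely_non_Urysohn_common_adherent (X : topologicalType) (A : set X)
    (x : X) :
  A !=set0 -> (forall y B, A y -> open B -> B y -> closure B x) ->
  finitely_non_Urysohn A.
Proof.
move=> A0 adhx; split=> // F _ _ FA U oU; exists x => y Fy.
by have [oUy Uyy] := oU y Fy; apply: adhx oUy Uyy; exact: FA.
Qed.

Theorem corollary2p17 (X : topologicalType) (x : X) :
  finitely_non_Urysohn (theta_closure [set x]) /\ theta_closure [set x] x.
Proof.
have thx := theta_closure_set1_refl X x.
split=> //; apply: (@finitely_non_Urysohn_common_adherent _ _ x).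
- by exists x.
- by move=> y B /theta_closure_set1P; apply.
Qed.
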